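(* Under the standing assumptions, for every $p^*\in X^*$: (i) $v(P_{p^*})\ge v(D^F_{p^*})$ if and only if $\Omega\cap B_{p^*}\subseteq\operatorname{epi}(f-g+\delta_A)^c\cap B_{p^*}$; (ii) $v(P_{p^*})\ge v(\bar D^F_{p^*})$ if and only if $K\cap B_{p^*}\subseteq\operatorname{epi}(f-g+\delta_A)^c\cap B_{p^*}$.
   Context: Let $X$ be a nontrivial separated locally convex space with topological dual $X^*$, endowed with the topology $\sigma(X,X^* )$; $\langle x,x^*\rangle$ is the value of $x^*\in X^*$ at $x\in X$. Put $W:=X^*\times X^*\times\mathbb{R}$, $\mathbb{R}_{++}:=]0,+\infty[$ and $Z:=X^*\times X^*\times\mathbb{R}_{++}$. For $y^*\in X^*$, $\alpha\in\mathbb{R}$, let $H^-_{y^*,\alpha}:=\{x\in X:\langle x,y^*\rangle<\alpha\}$. The coupling function $c:X\times W\to\overline{\mathbb{R}}$ is $c(x,(x^*,y^*,\alpha)):=\langle x,x^*\rangle$ if $\langle x,y^*\rangle<\alpha$ and $:=+\infty$ otherwise. For $h:X\to\overline{\mathbb{R}}$ its $c$-conjugate is $h^c:W\to\overline{\mathbb{R}}$, $h^c(w):=\sup_{x\in X}\{c(x,w)-h(x)\}$, with the convention $(+\infty)+(-\infty)=(-\infty)+(+\infty)=(+\infty)-(+\infty)=(-\infty)-(-\infty)=-\infty$ (so for proper $h$, $h^c(x^*,y^*,\alpha)=h^*(x^* )$ if $\operatorname{dom}h\subseteq H^-_{y^*,\alpha}$ and $+\infty$ otherwise). Epigraphs of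 functions on $W$ are subsets of $W\times\mathbb{R}$. $\delta_A$ is the indicator function of $A$. For $E\subseteq W\times\mathbb{R}$ and $e\in W\times\mathbb{R}$, $E-e:=\{z-e:z\in E\}$. Standing assumptions: $f,g:X\to\overline{\mathbb{R}}$ proper convex with $\operatorname{dom}f\subseteq\operatorname{dom}g$, $A\subseteq X$ nonempty, convention $(+\infty)-(+\infty)=+\infty$ in $f-g$. For $p^*\in X^*$: $(P_{p^*})$ is $\inf_{x\in A}\{f(x)-g(x)+\langle x,p^*\rangle\}$ with value $v(P_{p^*})$; with $\varphi_{p^*}(u^*,v^*,\gamma;x^*,y^*,\alpha):=g^c(u^*,v^*,\gamma)-f^c(u^*-x^*-p^*,-y^*,\alpha)-\delta_A^c(x^*,y^*,\alpha)$, the duals are $v(D^F_{p^*}):=\sup_{(x^*,y^*,\alpha)\in Z}\inf_{(u^*,v^*,\gamma)\in\operatorname{dom}g^c}\varphi_{p^*}$ and $v(\bar D^F_{p^*}):=\inf_{(u^*,v^*,\gamma)\in\operatorname{dom}g^c}\sup_{(x^*,y^*,\alpha)\in Z}\varphi_{p^*}$. Sets: $B_{p^*}:=\{-p^*\}\times\{0\}\times\mathbb{R}_{++}\times\mathbb{R}\subseteq W\times\mathbb{R}$; $\Omega:=\bigcup_{(x^*,y^*,\alpha)\in\operatorname{dom}\delta_A^c}\ \bigcap_{(u^*,v^*,\gamma)\in\operatorname{dom}g^c}\Big[\operatorname{epi}\big(f-c(\cdot,(-x^*,-y^*,\alpha))\big)^c-\big(u^*,0,0,g^c(u^*,v^*,\gamma)-\delta_A^c(x^*,y^*,\alpha)\big)\Big]$,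 $K:=\bigcap_{(u^*,v^*,\gamma)\in\operatorname{dom}g^c}\ \bigcup_{(x^*,y^*,\alpha)\in\operatorname{dom}\delta_A^c}\Big[\operatorname{epi}\big(f-c(\cdot,(-x^*,-y^*,\alpha))\big)^c-\big(u^*,0,0,g^c(u^*,v^*,\gamma)-\delta_A^c(x^*,y^*,\alpha)\big)\Big]$. *)

From HB Require Import structures.
From mathcomp Require Import all_boot all_order all_algebra.
From mathcomp Require Import all_classical reals constructive_ereal ereal.
Set Implicit Arguments. Unset Strict Implicit. Unset Printing Implicit Defensive.
Import Order.TTheory GRing.Theory Num.Theory.
Local Open Scope classical_set_scope.
Local Open Scope ring_scope.

Section Defs.
Context {R : realType} {X Xs : lmodType R} (pair : X -> Xs -> R).

(* (X, X^* ) is a separated dual pair; X carries sigma(X,X^* ), which is a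
   separated locally convex topology whose topological dual is exactly X^*. *)
Definition separated_dual_pair : Prop :=
  (forall x1 x2 xs, pair (x1 + x2) xs = pair x1 xs + pair x2 xs) /\
      (forall (a : R) x xs, pair (a *: x) xs = a * pair x xs) /\
      (forall x xs1 xs2, pair x (xs1 + xs2) = pair x xs1 + pair x xs2) /\
      (forall (a : R) x xs, pair x (a *: xs) = a * pair x xs) /\
      (forall x, (forall xs, pair x xs = 0) -> x = 0) /\
      (forall xs, (forall x, pair x xs = 0) -> xs = 0).

Definition W := (Xs * Xs * R)%type.

Local Open Scope ereal_scope.

Definition coupling (x : X) (w : W) : \bar R :=
  if (pair x w.1.2 < w.2)%R then (pair x w.1.1)%:E else +oo.

(* c-conjugate; mathcomp's [adde] has (+oo) + (-oo) = -oo, as required *)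
Definition cconj (h : X -> \bar R) (w : W) : \bar R :=
  ereal_sup [set coupling x w - h x | x in [set: X]].

(* difference of functions on X with the convention (+oo) - (+oo) = +oo *)
Definition dsub (a b : \bar R) : \bar R := dual_adde a (- b).

Definition indic (A : set X) (x : X) : \bar R := if `[< A x >] then 0 else +oo.

Definition edom (F : W -> \bar R) : set W := [set w | F w < +oo].

Definition epi (F : W -> \bar R) : set (W * R) := [set z | F z.1 <= z.2%:E].

Definition subWR (z e : W * R) : W * R :=
  ((z.1.1.1 - e.1.1.1, z.1.1.2 - e.1.1.2, z.1.2 - e.1.2), z.2 - e.2)%R.
Definition translate (E : set (W * R)) (e : W * R) : set (W * R) :=
  [set subWR z e | z in E].

Definition Bset (p : Xs) : set (W * R) :=
  [set z : W * R | z.1.1.1 = (- p)%R /\ z.1.1.2 = 0%R /\ (0 < z.1.2)%R].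

Definition Zset : set W := [set w : W | (0 < w.2)%R].

Definition proper_fun (f : X -> \bar R) : Prop :=
  (forall x, f x != -oo) /\ exists x, f x < +oo.

Definition convex_fun (f : X -> \bar R) : Prop :=
  forall x y (a b t : R), f x <= a%:E -> f y <= b%:E -> (0 <= t <= 1)%R ->
    f (t *: x + (1 - t) *: y)%R <= (t * a + (1 - t) * b)%R%:E.

Definition dom_fun (f : X -> \bar R) : set X := [set x | f x < +oo].

Variables (f g : X -> \bar R) (A : set X).

Definition fmc (w : W) : X -> \bar R :=
  fun x => dsub (f x) (coupling x (- w.1.1, - w.1.2, w.2)%R).

Definition OKpiece (u w : W) : set (W * R) :=
  translate (epi (cconj (fmc w)))
    (u.1.1, 0%R, 0%R, (fine (cconj g u) - fine (cconj (indic A) w))%R).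

Definition Omega : set (W * R) :=
  \bigcup_(w in edom (cconj (indic A))) \bigcap_(u in edom (cconj g)) OKpiece u w.

Definition Kset : set (W * R) :=
  \bigcap_(u in edom (cconj g)) \bigcup_(w in edom (cconj (indic A))) OKpiece u w.

Definition fgA : X -> \bar R := fun x => dsub (f x) (g x) + indic A x.

Definition phi (p : Xs) (u w : W) : \bar R :=
  cconj g u - cconj f (u.1.1 - w.1.1 - p, - w.1.2, w.2)%R - cconj (indic A) w.

Definition vP (p : Xs) : \bar R :=
  ereal_inf [set dsub (f x) (g x) + (pair x p)%:E | x in A].

Definition vD (p : Xs) : \bar R :=
  ereal_sup [set ereal_inf [set phi p u w | u in edom (cconj g)] | w in Zset].

Definition vDbar (p : Xs) : \bar R :=
  ereal_inf [set ereal_sup [set phi p u w | w in Zset] | u in edom (cconj g)].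

End Defs.

From HB Require Import structures.
From mathcomp Require Import all_boot all_order all_algebra.
From mathcomp Require Import all_classical reals constructive_ereal ereal.
From mathcomp Require Import ring lra.
Import Order.TTheory GRing.Theory Num.Theory.
Local Open Scope classical_set_scope.
Local Open Scope ereal_scope.

(* On the ray B_{p*} everything is explicit.  Conjugating
   f - c(., (-x*,-y*,alpha)) at (u* - p*, 0, alpha') gives
   f^c(u* - x* - p*, -y*, alpha), so ((-p*,0,alpha'), r) lies in the piece of
   Omega and K indexed by (u, w) iff -r <= phi_{p*}(u; w); and
   (f - g + delta_A)^c (-p*, 0, alpha') = - v(P_{p*}), so the point lies in
   epi (f - g + delta_A)^c iff -r >= v(P_{p*}).  Each inclusion thus says that
   every real s below sup_w inf_u phi (resp. inf_u sup_w phi) is below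
   v(P_{p*}).  The duals range over Z rather than dom delta_A^c, which is
   harmless: phi is nondecreasing in alpha and is -oo outside dom delta_A^c. *)

Section ExtendedReals.
Variable R : realType.

Lemma lee_real_lt (a b : \bar R) : (forall t : R, t%:E < a -> t%:E <= b) -> a <= b.
Proof.
case: a => [a| |] H; last exact: leNye.
- case: b H => [b| |] H; [|exact: leey|].
  + rewrite lee_fin; case: (lerP a b) => // lt_ba.
    have := H ((a + b) / 2)%R; rewrite !lee_fin lte_fin => {}H.
    by have := H ltac:(lra); lra.
  + by have := H (a - 1)%R; rewrite lte_fin leeNy_eq => /(_ ltac:(lra)).
- case: b H => [b| |] H //.
  + by have := H (b + 1)%R (ltry _); rewrite lee_fin => {H} ?; exfalso; lra.
  + by have := H 0%R (ltry _); rewrite leeNy_eq.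
Qed.

Lemma ereal_sup_le_real (S : set (\bar R)) (b : \bar R) :
  ereal_sup S <= b <-> forall s : R, (exists2 x, S x & s%:E <= x) -> s%:E <= b.
Proof.
split=> [le_Sb s [x Sx le_sx] | H].
- exact: le_trans le_sx (le_trans (ereal_sup_ubound Sx) le_Sb).
- apply: ge_ereal_sup => x Sx; apply: lee_real_lt => t lt_tx.
  by apply: H; exists x => //; exact: ltW.
Qed.

Lemma lee_subDr_fin (F : \bar R) (r G D : R) :
  F <= (r + (G - D))%:E <-> (- r)%:E <= G%:E - F - D%:E.
Proof.
case: F => [F| |] /=.
- by rewrite !lee_fin; split=> ?; lra.
- by rewrite leye_eq leeNy_eq.
- by split=> _; [exact: leey | exact: leNye].
Qed.

Lemma dsub_neqNy (a b : \bar R) :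
  a != -oo -> b != -oo -> (a < +oo -> b < +oo) -> dsub a b != -oo.
Proof. by case: a => [a| |]; case: b => [b| |] //= _ _ /(_ (ltry _)). Qed.

End ExtendedReals.

Section Conjugates.
Variables (R : realType) (X Xs : lmodType R) (pair : X -> Xs -> R).

Lemma cconj_gtNy (h : X -> \bar R) w : (exists x, h x < +oo) -> -oo < cconj pair h w.
Proof.
case=> x hx; apply: lt_le_trans (ereal_sup_ubound (ex_intro2 _ _ x I erefl)).
by rewrite /coupling; case: ifP => _; move: hx; case: (h x) => //= r _; exact: ltNyr.
Qed.

Lemma cconj_antitone (h : X -> \bar R) x' y' (a b : R) : (a <= b)%R ->
  cconj pair h (x', y', b) <= cconj pair h (x', y', a).
Proof.
move=> le_ab; apply: ge_ereal_sup => _ [x _ <-].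
apply: le_trans (ereal_sup_ubound (ex_intro2 _ _ x I erefl)).
apply: leeD2r; rewrite /coupling /=.
case: ifP => hb; case: ifP => ha //; first exact: leey.
by rewrite (lt_le_trans ha le_ab) in hb.
Qed.

Definition addWR (z e : @W R Xs * R) : @W R Xs * R :=
  ((z.1.1.1 + e.1.1.1, z.1.1.2 + e.1.1.2, z.1.2 + e.1.2), z.2 + e.2)%R.

Lemma translateP (E : set (@W R Xs * R)) e z : translate E e z <-> E (addWR z e).
Proof.
split=> [[z' Ez' <-] | Eze]; last exists (addWR z e) => //.
- by move: z' e Ez' => [[[? ?] ?] ?] [[[? ?] ?] ?]; rewrite /addWR /subWR /= !subrK.
- by move: z e {Eze} => [[[? ?] ?] ?] [[[? ?] ?] ?]; rewrite /addWR /subWR /= !addrK.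
Qed.

Hypothesis pairD : forall x u v, pair x (u + v) = (pair x u + pair x v)%R.

Lemma pair0r x : pair x 0 = 0%R.
Proof. by apply: (addrI (pair x 0)); rewrite addr0 -pairD addr0. Qed.

Lemma pairNr x v : pair x (- v) = (- pair x v)%R.
Proof. by apply: (addrI (pair x v)); rewrite subrr -pairD subrr pair0r. Qed.

Lemma coupling_pos x v (a : R) : (0 < a)%R ->
  coupling pair x (v, 0%R, a) = (pair x v)%:E.
Proof. by move=> a_gt0; rewrite /coupling /= pair0r a_gt0. Qed.

Lemma cconj_fmc (f : X -> \bar R) (w : @W R Xs) v (a : R) : (0 < a)%R ->
  cconj pair (fmc pair f w) (v, 0%R, a) = cconj pair f (v - w.1.1, - w.1.2, w.2)%R.
Proof.
move=> a_gt0; rewrite /cconj; congr ereal_sup; apply/seteqP.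
split=> _ [x _ <-]; exists x => //; rewrite coupling_pos // /fmc /coupling /dsub /=;
  case: ifP => _; case: (f x) => [r| |] //=;
  by rewrite /dual_adde /= ?pairD ?pairNr; congr (_%:E); ring.
Qed.

Lemma edom_cconj_indic (A : set X) : edom (cconj pair (indic A)) (0%R, 0%R, 1%R).
Proof.
apply: (@le_lt_trans _ _ 0); last exact: ltry.
apply: ge_ereal_sup => _ [x _ <-]; rewrite coupling_pos // pair0r /indic.
by case: (`[< A x >]) => /=; [rewrite subee | exact: leNye].
Qed.

End Conjugates.

Section Duality.
Context {R : realType} {X Xs : lmodType R} {pair : X -> Xs -> R}.
Context {f g : X -> \bar R} {A : set X}.
Hypothesis pairD : forall x u v, pair x (u + v) = (pair x u + pair x v)%R.
Hypotheses (f_proper : proper_fun f) (g_proper : proper_fun g).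
Hypotheses (dom_fg : dom_fun f `<=` dom_fun g) (A0 : A !=set0).

Local Notation phi := (phi pair f g A).
Local Notation vP := (vP pair f g A).
Local Notation dom_gc := (edom (cconj pair g)).
Local Notation dom_dc := (edom (cconj pair (indic A))).

Lemma phi_edomN p u w : ~ dom_dc w -> phi p u w = -oo.
Proof.
move=> dw; have dcw : cconj pair (indic A) w = +oo.
  by apply/eqP; apply: contra_notT dw; rewrite /edom /= ltey.
by rewrite /phi dcw addeNy.
Qed.

Lemma phi_le_Zset p w : exists2 w', Zset w' & forall u, phi p u w <= phi p u w'.
Proof.
exists (w.1, Order.max w.2 1%R); first by rewrite /Zset /= lt_max ltr01 orbT.
have le_max1 : (w.2 <= Order.max w.2 1)%R by rewrite le_max lexx.
move: w le_max1 => [[? ?] ?] /= le_max1 u.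
by apply: leeD; [apply: leeD2l|]; rewrite leeN2 cconj_antitone.
Qed.

Lemma OKpiece_Bset p (a r : R) u w : (0 < a)%R -> dom_gc u -> dom_dc w ->
  OKpiece pair f g A u w ((- p, 0, a), r)%R <-> (- r)%:E <= phi p u w.
Proof.
move=> a_gt0 gu dw.
have gu_fin : cconj pair g u = (fine (cconj pair g u))%:E.
  by rewrite fineK // fin_numElt gu cconj_gtNy //; case: g_proper.
have dw_fin : cconj pair (indic A) w = (fine (cconj pair (indic A) w))%:E.
  rewrite fineK // fin_numElt dw cconj_gtNy //.
  by case: A0 => x Ax; exists x; rewrite /indic asboolT.
rewrite /OKpiece translateP /epi /addWR /phi /= gu_fin dw_fin -lee_subDr_fin.
by rewrite !addr0 cconj_fmc // (addrC (- p)%R) addrAC.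
Qed.

Lemma cconj_fgA p (a : R) : (0 < a)%R ->
  cconj pair (fgA f g A) (- p, 0, a)%R = - vP p.
Proof.
move=> a_gt0; rewrite /vP /ereal_inf oppeK.
have fgx_neqNy x : dsub (f x) (g x) != -oo.
  by apply: dsub_neqNy; [case: f_proper | case: g_proper | apply: dom_fg].
have termE x : A x ->
    (pair x (- p))%:E - fgA f g A x = - (dsub (f x) (g x) + (pair x p)%:E).
  move=> Ax; rewrite /fgA /indic asboolT // adde0 pairNr //.
  by case: (dsub _ _) => [d| |] //=; congr (_%:E); ring.
apply/le_anti/andP; split; apply: ge_ereal_sup.
- move=> _ [x _ <-]; rewrite coupling_pos //.
  have [Ax|nAx] := pselect (A x).
  + rewrite termE //; apply: ereal_sup_ubound.
    by exists (dsub (f x) (g x) + (pair x p)%:E) => //; exists x.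
  + rewrite /fgA /indic asboolF //.
    by have := fgx_neqNy x; case: (dsub _ _) => [d| |] //= _; exact: leNye.
- move=> _ [_ [x Ax <-] <-]; rewrite -termE //.
  by apply: ereal_sup_ubound; exists x => //; rewrite coupling_pos.
Qed.

Definition Omega_level p (s : R) := exists2 w, dom_dc w &
  forall u, dom_gc u -> s%:E <= phi p u w.

Definition Kset_level p (s : R) := forall u, dom_gc u ->
  exists2 w, dom_dc w & s%:E <= phi p u w.

Lemma Omega_Bset p (a r : R) : (0 < a)%R ->
  Omega pair f g A ((- p, 0, a), r)%R <-> Omega_level p (- r).
Proof.
move=> a_gt0; split=> -[w dw Hw]; exists w => // u gu;
  by apply/(OKpiece_Bset _ _ _ _ _ a_gt0 gu dw); apply: Hw.
Qed.

Lemma Kset_Bset p (a r : R) : (0 < a)%R ->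
  Kset pair f g A ((- p, 0, a), r)%R <-> Kset_level p (- r).
Proof.
move=> a_gt0; split=> H u gu; have [w dw Hw] := H u gu;
  by exists w => //; apply/(OKpiece_Bset _ _ _ _ _ a_gt0 gu dw).
Qed.

Lemma Bset_sub_epi (S : set (@W R Xs * R)) (P : R -> Prop) p :
  (forall a r, (0 < a)%R -> S ((- p, 0, a), r)%R <-> P (- r)%R) ->
  S `&` Bset p `<=` epi (cconj pair (fgA f g A)) `&` Bset p <->
  (forall s, P s -> s%:E <= vP p).
Proof.
move=> SP; split=> [sub_SB s Ps | le_vP [[[x' y'] a] r] [Sz [/= ex [ey a_gt0]]]].
- have [] := sub_SB ((- p, 0, 1), - s)%R; first by split; rewrite ?SP ?opprK.
  by rewrite /epi /= cconj_fgA // EFinN leeN2.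
- subst x' y'; split=> //; rewrite /epi /= cconj_fgA // leeNl -EFinN.
  by apply: le_vP; apply/(SP _ _ a_gt0).
Qed.

Lemma vD_le_vP p :
  vD pair f g A p <= vP p <-> forall s, Omega_level p s -> s%:E <= vP p.
Proof.
rewrite ereal_sup_le_real; split=> H s.
- case=> w _ Hw; have [w' Zw' le_w'] := phi_le_Zset p w.
  apply: H; exists (ereal_inf [set phi p u w' | u in dom_gc]); first by exists w'.
  apply: le_ereal_inf_tmp => _ [u gu <-].
  exact: le_trans (Hw u gu) (le_w' u).
- case=> _ [w _ <-] le_s_inf; apply: H.
  have lb u : dom_gc u -> s%:E <= phi p u w.
    by move=> gu; apply: le_trans le_s_inf _; apply: ereal_inf_lbound; exists u.
  have [dw|dwN] := pselect (dom_dc w); first by exists w.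
  (* phi p u w = -oo, so dom g^c is empty and any witness will do *)
  exists (0, 0, 1)%R; first exact: edom_cconj_indic.
  by move=> u /lb; rewrite phi_edomN // leeNy_eq.
Qed.

Lemma vDbar_le_vP p :
  vDbar pair f g A p <= vP p <-> forall s, Kset_level p s -> s%:E <= vP p.
Proof.
split=> [le_vP s Hs | H].
- apply: le_trans le_vP; apply: le_ereal_inf_tmp => _ [u gu <-].
  have [w _ le_s] := Hs u gu; have [w' Zw' le_w'] := phi_le_Zset p w.
  apply: le_trans le_s (le_trans (le_w' u) _).
  by apply: ereal_sup_ubound; exists w'.
- apply: lee_real_lt => t lt_t; apply: H => u gu.
  have := lt_le_trans lt_t (ereal_inf_lbound (ex_intro2 _ _ u gu erefl)).
  case/ereal_sup_gt => _ [w _ <-] lt_tw; exists w; last exact: ltW.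
  by apply: contrapT => dwN; move: lt_tw; rewrite phi_edomN // ltNge leNye.
Qed.

End Duality.

Theorem proposition6p2 (R : realType) (X Xs : lmodType R) (pair : X -> Xs -> R)
  (f g : X -> \bar R) (A : set X) :
  separated_dual_pair pair ->
  (exists x : X, x != 0%R) ->
  proper_fun f -> convex_fun f ->
  proper_fun g -> convex_fun g ->
  dom_fun f `<=` dom_fun g ->
  A !=set0 ->
  forall p : Xs,
    (vD pair f g A p <= vP pair f g A p <->
       Omega pair f g A `&` Bset p `<=` epi (cconj pair (fgA f g A)) `&` Bset p) /\
    (vDbar pair f g A p <= vP pair f g A p <->
       Kset pair f g A `&` Bset p `<=` epi (cconj pair (fgA f g A)) `&` Bset p).
Proof.
move=> [_ [_ [pairD _]]] _ f_proper _ g_proper _ dom_fg A0 p.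
have sub_epiE := Bset_sub_epi (A := A) pairD f_proper g_proper dom_fg.
split.
- by rewrite (vD_le_vP pairD) (sub_epiE _ _ p (Omega_Bset pairD g_proper A0 p)).
- by rewrite vDbar_le_vP (sub_epiE _ _ p (Kset_Bset pairD g_proper A0 p)).
Qed.
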